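(* Let $\|\cdot\|$ be a norm on $\mathbb{R}^n$ such that its dual norm $\|\cdot\|^*$ is an algebra norm. Then $\|f\|\ge|\mathbb{E}_xf(x)|$ and $\|f\|^*\ge\|f\|_\infty$ for every $f\in\mathbb{R}^n$.
   Context: Functions in $\mathbb{R}^n$ are functions on $\{1,\dots,n\}$; $\mathbb{E}_x$ denotes $\frac1n\sum_x$, $\langle f,g\rangle=\mathbb{E}_xf(x)g(x)$, $\|f\|_\infty=\max_x|f(x)|$. The dual norm is $\|\phi\|^*=\max\{\langle f,\phi\rangle:\|f\|\le1\}$. An algebra norm is a norm $N$ on $\mathbb{R}^n$ with $N(fg)\le N(f)N(g)$ for all $f,g$ (pointwise product) and $N(\mathbf 1)=1$ for the constant function $\mathbf 1$. *)

From mathcomp Require Import all_boot all_order all_algebra.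
From mathcomp Require Import reals.
Set Implicit Arguments. Unset Strict Implicit. Unset Printing Implicit Defensive.
Import Order.TTheory GRing.Theory Num.Theory.
Local Open Scope ring_scope.

Section Defs.
Variables (R : realType) (n : nat).

Definition expect (f : 'I_n -> R) : R := (\sum_(x < n) f x) / n%:R.

Definition inner (f g : 'I_n -> R) : R := expect (fun x => f x * g x).

Definition supnorm (f : 'I_n -> R) : R := \big[Num.max/0]_(x < n) `|f x|.

Definition is_norm (N : ('I_n -> R) -> R) : Prop :=
  [/\ forall f, N f = 0 -> f = (fun _ => 0),
      forall (a : R) f, N (fun x => a * f x) = `|a| * N f
    & forall f g, N (fun x => f x + g x) <= N f + N g].

Definition is_dual_norm (N D : ('I_n -> R) -> R) : Prop :=
  forall phi,
    (forall f, N f <= 1 -> inner f phi <= D phi) /\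
    (exists f, N f <= 1 /\ inner f phi = D phi).

Definition is_algebra_norm (N : ('I_n -> R) -> R) : Prop :=
  [/\ is_norm N,
      forall f g, N (fun x => f x * g x) <= N f * N g
    & N (fun _ => 1) = 1].

End Defs.

From mathcomp Require Import all_boot all_order all_algebra.
From mathcomp Require Import reals.
From mathcomp Require Import lra.
From Stdlib Require Import FunctionalExtensionality.
Set Implicit Arguments. Unset Strict Implicit. Unset Printing Implicit Defensive.
Import Order.TTheory GRing.Theory Num.Theory.
Local Open Scope ring_scope.

(* Since D 1 = 1, the first bound is the duality inequality <f, 1> <= N f * D 1.
   For the second, testing phi against the point mass at x gives
   |phi x| <= C * D phi with C independent of phi. Taking phi = f^k and using
   submultiplicativity, |f x|^k <= C * (D f)^k for every k, and letting k grow
   (Bernoulli's inequality) forces |f x| <= D f. *)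

Lemma bernoulli_ineq (R : realDomainType) (x : R) (k : nat) :
  0 <= x -> 1 + x *+ k <= (1 + x) ^+ k.
Proof.
move=> x_ge0; elim: k => [|k IHk]; first by rewrite mulr0n addr0 expr0.
have xk_ge0 : 0 <= x *+ k by rewrite mulrn_wge0.
rewrite exprS; apply: le_trans (_ : (1 + x) * (1 + x *+ k) <= _).
  by rewrite mulrS; have := mulr_ge0 x_ge0 xk_ge0; lra.
by rewrite ler_wpM2l // addr_ge0.
Qed.

Lemma le1_of_exprn_bounded (R : archiRealFieldType) (r C : R) :
  (forall k, r ^+ k <= C) -> r <= 1.
Proof.
move=> rC; rewrite leNgt; apply/negP => r_gt1.
have r1_gt0 : 0 < r - 1 by rewrite subr_gt0.
have C_ge1 : 1 <= C by have := rC 0%N; rewrite expr0.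
have C_ge0 : 0 <= C / (r - 1) :=
  divr_ge0 (le_trans ler01 C_ge1) (ltW r1_gt0).
have := archi_boundP C_ge0; set k := Num.bound _; rewrite ltr_pdivrMr // => Ck.
have := @bernoulli_ineq _ _ k (ltW r1_gt0).
rewrite -mulr_natr [1 + (r - 1)]addrC subrK.
have := rC k; lra.
Qed.

Lemma ler_of_exprn_le_scaled (R : archiRealFieldType) (a b C : R) :
  0 <= b -> (forall k, a ^+ k <= C * b ^+ k) -> a <= b.
Proof.
move=> b_ge0 abC; have [b0|b_neq0] := eqVneq b 0.
  by have := abC 1%N; rewrite !expr1 b0 mulr0.
have b_gt0 : 0 < b by rewrite lt0r b_neq0.
suff : a / b <= 1 by rewrite ler_pdivrMr // mul1r.
apply: (@le1_of_exprn_bounded _ _ C) => k.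
by rewrite expr_div_n ler_pdivrMr ?exprn_gt0.
Qed.

Section InnerProduct.
Variables (R : realType) (n : nat).
Implicit Types (f phi : 'I_n -> R) (a : R).

Lemma inner_scalel a f phi : inner (fun x => a * f x) phi = a * inner f phi.
Proof.
rewrite /inner /expect mulrA mulr_sumr; congr (_ / _).
by apply: eq_bigr => x _; rewrite mulrA.
Qed.

Lemma inner_oppl f phi : inner (fun x => - f x) phi = - inner f phi.
Proof.
rewrite -mulN1r -inner_scalel; congr inner.
by apply: functional_extensionality => x; rewrite mulN1r.
Qed.

Lemma inner_cst1r f : inner f (fun _ => 1) = expect f.
Proof. by rewrite /inner /expect; under eq_bigr do rewrite mulr1. Qed.

Definition point_mass (x : 'I_n) : 'I_n -> R := fun y => (y == x)%:R.

Lemma inner_point_mass x phi : inner (point_mass x) phi = phi x / n%:R.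
Proof.
rewrite /inner /expect (bigD1 x) //= big1 ?addr0 /point_mass ?eqxx ?mul1r //.
by move=> y /negbTE ->; rewrite mul0r.
Qed.

End InnerProduct.

Arguments point_mass {R n} x.

Section Norms.
Variables (R : realType) (n : nat) (N : ('I_n -> R) -> R).
Hypothesis normN : is_norm N.

Lemma norm_ge0 f : 0 <= N f.
Proof.
have [_ normZ normD] := normN.
have := normD f (fun x => -1 * f x).
have -> : (fun x => f x + -1 * f x) = (fun x => 0 * f x).
  by apply: functional_extensionality => x; rewrite mulN1r subrr mul0r.
rewrite !normZ normr0 normrN normr1 mul0r mul1r; lra.
Qed.

Lemma norm_opp f : N (fun x => - f x) = N f.
Proof.
have [_ normZ _] := normN.
rewrite -[RHS]mul1r -normrN1 -normZ; congr N.
by apply: functional_extensionality => x; rewrite mulN1r.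
Qed.

Variable D : ('I_n -> R) -> R.
Hypothesis dualND : is_dual_norm N D.

Lemma inner_le_dual f phi : inner f phi <= N f * D phi.
Proof.
have [normf0 normZ _] := normN.
have [Nf0|Nf_neq0] := eqVneq (N f) 0.
  rewrite Nf0 mul0r (normf0 _ Nf0) /inner /expect big1 ?mul0r // => x _.
  exact: mul0r.
have Nf_gt0 : 0 < N f by rewrite lt0r Nf_neq0 norm_ge0.
pose g x := (N f)^-1 * f x.
have Ng_le1 : N g <= 1 by rewrite normZ ger0_norm ?invr_ge0 ?norm_ge0 // mulVf.
have -> : inner f phi = N f * inner g phi by rewrite inner_scalel mulVKf.
by rewrite ler_wpM2l ?norm_ge0 //; apply: (proj1 (dualND phi)).
Qed.

Lemma normr_inner_le_dual f phi : `|inner f phi| <= N f * D phi.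
Proof.
rewrite ler_norml inner_le_dual andbT lerNl -inner_oppl -norm_opp.
exact: inner_le_dual.
Qed.

Lemma normr_le_dual_point_mass phi (x : 'I_n) :
  `|phi x| <= n%:R * N (point_mass x) * D phi.
Proof.
have n_gt0 : 0 < n%:R :> R by rewrite ltr0n (leq_ltn_trans _ (ltn_ord x)).
have := normr_inner_le_dual (point_mass x) phi.
by rewrite inner_point_mass normrM normfV normr_nat ler_pdivrMr // mulrC mulrA.
Qed.

End Norms.

Lemma algebra_norm_exprn (R : realType) (n : nat) (D : ('I_n -> R) -> R) :
  is_algebra_norm D -> forall f k, D (fun x => f x ^+ k) <= D f ^+ k.
Proof.
move=> [normD normM norm1] f; elim=> [|k IHk].
  by rewrite expr0 -norm1; apply: lexx.
have -> : (fun x => f x ^+ k.+1) = (fun x => f x * f x ^+ k).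
  by apply: functional_extensionality => x; rewrite exprS.
by rewrite exprS (le_trans (normM _ _)) // ler_wpM2l ?norm_ge0.
Qed.

Theorem lemma4p2 (R : realType) (n : nat) (N D : ('I_n -> R) -> R) :
  is_norm N -> is_dual_norm N D -> is_algebra_norm D ->
  forall f : 'I_n -> R, `|expect f| <= N f /\ supnorm f <= D f.
Proof.
move=> normN dualND algD f; have [normD _ norm1] := algD.
split.
  have := normr_inner_le_dual normN dualND f (fun _ => 1).
  by rewrite inner_cst1r norm1 mulr1.
apply: bigmax_le => [|x _]; first exact: norm_ge0.
apply: (@ler_of_exprn_le_scaled _ _ _ (n%:R * N (point_mass x))) => [|k].
  exact: norm_ge0.
have := normr_le_dual_point_mass normN dualND (fun y => f y ^+ k) x.
rewrite normrX => /le_trans; apply.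
by rewrite ler_wpM2l ?mulr_ge0 ?norm_ge0 ?algebra_norm_exprn.
Qed.
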